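(* Let $Z\in\mathbb{R}^{n\times a}$ and $W\in\mathbb{R}^{a\times b}$, and $\Phi=ZW$. Let $\Sigma_Z=\frac1n Z^\top Z$ and let $W=QS$ be the right polar decomposition of $W$, where $Q\in\mathbb{R}^{a\times b}$ has orthonormal columns and $S=(W^\top W)^{1/2}$. Let $\eta_1\ge\cdots\ge\eta_d>0$ be the positive eigenvalues of $Q^\top\Sigma_Z Q$, with $d=\operatorname{rank}(Q^\top\Sigma_ZQ)\ge 1$, and for $\delta\in[0,1]$ let $\mathrm{srank}_\delta(\Phi)=\min\{k:\ \sum_{i=1}^k\sigma_i(\Phi)/\sum_{i=1}^d\sigma_i(\Phi)\ge 1-\delta\}$, where $\sigma_1(\Phi)\ge\cdots\ge\sigma_d(\Phi)$ are the nonzero singular values of $\Phi$. If $\varepsilon=\sqrt{\mathrm{DfI}(W)}<1$, then \[ \mathrm{srank}_\delta(\Phi)\ge\left\lceil\frac{(1-\delta)d}{\delta\sqrt{\frac{1+\varepsilon}{1-\varepsilon}}\sqrt{\frac{\eta_1}{\eta_d}}+(1-\delta)}\right\rceil . \] If additionally $\Sigma_Z=I$, then \[ \mathrm{srank}_\delta(\Phi)\ge\left\lceil\frac{(1-\delta)d}{\delta\sqrt{\frac{1+\varepsilon}{1-\varepsilon}}+(1-\delta)}\right\rceil . \]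
   Context: $\mathrm{DfI}(W)=\|W^\top W-I\|_F^2$ (Deviation from Isometry), with $\|\cdot\|_F$ the Frobenius norm. $\lceil\cdot\rceil$ is the ceiling function. *)

From HB Require Import structures.
From mathcomp Require Import all_boot all_order all_algebra.
From mathcomp Require Import reals.
Set Implicit Arguments. Unset Strict Implicit. Unset Printing Implicit Defensive.
Import Order.TTheory GRing.Theory Num.Theory.
Local Open Scope ring_scope.

Section Defs.
Variable R : realType.

Definition DfI (a b : nat) (W : 'M[R]_(a, b)) : R :=
  \sum_(i < b) \sum_(j < b) ((W^T *m W - 1%:M) i j) ^+ 2.

Definition psd_sym (m : nat) (S : 'M[R]_m) : Prop :=
  S^T = S /\ forall v : 'cV[R]_m, 0 <= (v^T *m S *m v) 0 0.

Definition is_psd_sqrt (m : nat) (M S : 'M[R]_m) : Prop :=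
  psd_sym S /\ S *m S = M.

(* eta is the nonincreasing list of the positive eigenvalues of M, counted
   with algebraic multiplicity (all other eigenvalues being 0):
   char_poly M = X^(m - size eta) * prod_(x <- eta) (X - x). *)
Definition pos_eigenvalues (m : nat) (M : 'M[R]_m) (eta : seq R) : Prop :=
  sorted (fun x y => y <= x) eta /\ all (fun x => 0 < x) eta /\
  (size eta <= m)%N /\
  char_poly M = 'X^(m - size eta) * \prod_(x <- eta) ('X - x%:P).

Definition nz_singvals (n b : nat) (Phi : 'M[R]_(n, b)) (sigma : seq R) : Prop :=
  exists lam, pos_eigenvalues (Phi^T *m Phi) lam /\ sigma = map Num.sqrt lam.

Definition psum (s : seq R) (k : nat) : R := \sum_(i < k) s`_i.

Definition srank (delta : R) (s : seq R) : nat :=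
  find (fun k => 1 - delta <= psum s k / psum s (size s)) (iota 0 (size s).+1).

End Defs.

From mathcomp Require Import all_boot all_order all_algebra.
From mathcomp Require Import reals complex.
From mathcomp Require Import ring lra.
Set Implicit Arguments.
Unset Strict Implicit.
Unset Printing Implicit Defensive.
Import Order.TTheory GRing.Theory Num.Theory.
Local Open Scope ring_scope.

(* Write M := Q^T Sigma_Z Q.  Since W = Q S with S symmetric, Phi^T Phi = S (n M) S,
   and S^2 = W^T W is an eps-perturbation of the identity: by Cauchy-Schwarz for the
   Frobenius inner product, |y (W^T W - I) y^T| <= eps |y|^2.  Testing an eigenvector
   v of S (n M) S against x = v S shows that every positive eigenvalue of Phi^T Phi lies
   in [n (1 - eps) eta_d, n (1 + eps) eta_1], so sigma_1 <= kappa sigma_d with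
   kappa = sqrt((1 + eps) / (1 - eps)) sqrt(eta_1 / eta_d).  Finally, if k terms of a
   nonincreasing positive sequence with that ratio carry a fraction 1 - delta of its
   sum, then (1 - delta) (d - k) sigma_d <= delta k kappa sigma_d, which is the bound. *)

Section RealField.
Variable R : realFieldType.

Definition qform (m : nat) (A : 'M[R]_m) (x : 'rV[R]_m) : R := (x *m A *m x^T) 0 0.

Lemma qformE m (A : 'M[R]_m) x :
  qform A x = \sum_i \sum_j A i j * (x 0 i * x 0 j).
Proof.
rewrite /qform mxE [RHS]exchange_big /=; apply: eq_bigr => j _.
rewrite !mxE big_distrl /=; apply: eq_bigr => i _; ring.
Qed.

Lemma qform1E m (x : 'rV[R]_m) : qform 1%:M x = \sum_i x 0 i ^+ 2.
Proof. by rewrite /qform mulmx1 mxE; apply: eq_bigr => i _; rewrite !mxE expr2. Qed.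

Lemma qform1_gt0 m (x : 'rV[R]_m) : x != 0 -> 0 < qform 1%:M x.
Proof.
move=> x_neq0; rewrite qform1E lt_def sumr_ge0 ?andbT => [|i _]; last exact: sqr_ge0.
apply: contra x_neq0 => /eqP /psumr_eq0P x2_eq0; apply/eqP/matrixP => i j.
rewrite (ord1 i) mxE; apply/eqP; rewrite -sqrf_eq0; apply/eqP.
exact: x2_eq0 (fun k _ => sqr_ge0 _) j isT.
Qed.

Lemma qformD m (A B : 'M[R]_m) x : qform (A + B) x = qform A x + qform B x.
Proof. by rewrite /qform mulmxDr mulmxDl mxE. Qed.

Lemma qformN m (A : 'M[R]_m) x : qform (- A) x = - qform A x.
Proof. by rewrite /qform mulmxN mulNmx mxE. Qed.

Lemma qformZ m c (A : 'M[R]_m) x : qform (c *: A) x = c * qform A x.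
Proof. by rewrite /qform -scalemxAr -scalemxAl mxE. Qed.

Lemma sum_mul_sqr_le (I : finType) (u v : I -> R) :
  (\sum_i u i * v i) ^+ 2 <= (\sum_i u i ^+ 2) * (\sum_i v i ^+ 2).
Proof.
set F := (\sum_i u i ^+ 2) * (\sum_i v i ^+ 2) - (\sum_i u i * v i) ^+ 2.
have half : \sum_i \sum_j (u i ^+ 2 * v j ^+ 2 - u i * v i * (u j * v j)) = F.
  rewrite /F expr2 !mulr_suml -sumrB; apply: eq_bigr => i _.
  by rewrite !mulr_sumr -sumrB.
have lagrange : \sum_i \sum_j (u i * v j - u j * v i) ^+ 2 = F + F.
  rewrite -[X in _ = X + _]half -[X in _ = _ + X]half.
  rewrite [X in _ = _ + X]exchange_big -big_split /=.
  apply: eq_bigr => i _; rewrite -big_split /=; apply: eq_bigr => j _; ring.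
have : 0 <= \sum_i \sum_j (u i * v j - u j * v i) ^+ 2.
  by apply: sumr_ge0 => i _; apply: sumr_ge0 => j _; apply: sqr_ge0.
by rewrite lagrange -mulr2n pmulrn_lge0 // subr_ge0.
Qed.

Lemma qform_sqr_le m (E : 'M[R]_m) x :
  qform E x ^+ 2 <= (\sum_i \sum_j E i j ^+ 2) * qform 1%:M x ^+ 2.
Proof.
have -> : qform 1%:M x ^+ 2 = \sum_i \sum_j (x 0 i * x 0 j) ^+ 2.
  rewrite qform1E expr2 mulr_suml; apply: eq_bigr => i _.
  by rewrite mulr_sumr; apply: eq_bigr => j _; ring.
rewrite qformE !pair_bigA /=.
exact: sum_mul_sqr_le (fun p => E p.1 p.2) (fun p => x 0 p.1 * x 0 p.2).
Qed.

Lemma eigenvalue_conj_qform_bounds m (S M : 'M[R]_m) (e0 e1 eps l : R) :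
  M^T = M ->
  (forall x, e0 * qform M x <= qform (M *m M) x <= e1 * qform M x) ->
  (forall y, (1 - eps) * qform 1%:M y <= qform (S *m S) y <= (1 + eps) * qform 1%:M y) ->
  0 <= e1 -> 0 <= eps <= 1 -> l != 0 -> eigenvalue (S *m M *m S) l ->
  (1 - eps) * e0 <= l <= (1 + eps) * e1.
Proof.
move=> MT hM hS e1_ge0 /andP[eps_ge0 eps_le1] l_neq0 /eigenvalueP[v hv v_neq0].
set x := v *m S; set u := x *m M.
have lv : l *: v = u *m S by rewrite -hv /u /x !mulmxA.
have u_neq0 : u != 0.
  apply: contra v_neq0 => /eqP u0.
  by move: lv; rewrite u0 mul0mx => /eqP; rewrite scaler_eq0 (negPf l_neq0).
have lx : l *: x = u *m (S *m S) by rewrite /x scalemxAl lv mulmxA.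
have quM : l * qform M x = qform (S *m S) u.
  by rewrite /qform -lx -scalemxAl [RHS]mxE /u [(x *m M)^T]trmx_mul MT mulmxA.
have quu : qform (M *m M) x = qform 1%:M u.
  by rewrite /qform /u mulmx1 [(x *m M)^T]trmx_mul MT !mulmxA.
have := qform1_gt0 u_neq0; have := hM x; have := hS u.
rewrite -quM -quu => /andP[lo_S hi_S] /andP[lo_M hi_M] uu_gt0.
have qM_gt0 : 0 < qform M x by nra.
by apply/andP; split; rewrite -(ler_pM2r qM_gt0); nra.
Qed.

Lemma sorted_ge_nth_le (s : seq R) i j :
  sorted (fun x y => y <= x) s -> (i <= j < size s)%N -> s`_j <= s`_i.
Proof.
move=> s_sorted /andP[ij j_lt].
have ge_trans : transitive (fun x y : R => y <= x).
  by move=> ? ? ? h1 h2; exact: le_trans h2 h1.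
apply: (sorted_leq_nth ge_trans (fun x => lexx x)) => //; rewrite inE //.
exact: leq_ltn_trans ij j_lt.
Qed.

Lemma sorted_ge_mem_bounds (s : seq R) x :
  sorted (fun x y => y <= x) s -> x \in s -> s`_(size s).-1 <= x <= s`_0.
Proof.
move=> s_sorted xs; rewrite -(nth_index 0 xs).
have idx_lt : (index x s < size s)%N by rewrite index_mem.
have size_gt0 : (0 < size s)%N by case: (size s) idx_lt.
apply/andP; split; apply: sorted_ge_nth_le; rewrite // ?idx_lt ?andbT //.
by rewrite ltn_predL size_gt0 andbT -ltnS prednK.
Qed.

End RealField.

Section Srank.
Variable R : realType.

Lemma psum_sorted_ge_bounds (s : seq R) k :
  sorted (fun x y => y <= x) s -> (k <= size s)%N ->
  psum s k <= k%:R * s`_0 /\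
  (size s - k)%:R * s`_(size s).-1 <= psum s (size s) - psum s k.
Proof.
move=> s_sorted k_le.
have psumE j : psum s j = \sum_(0 <= i < j) s`_i by rewrite /psum big_mkord.
split.
  have -> : k%:R * s`_0 = \sum_(i < k) s`_0 by rewrite sumr_const card_ord mulr_natl.
  apply: ler_sum => i _.
  by apply: sorted_ge_nth_le; rewrite // (leq_trans (ltn_ord i)).
rewrite !psumE (big_cat_nat (leq0n k) k_le) /= addrC addrK.
rewrite mulr_natl -sumr_const_nat; apply: ler_sum_nat => i /andP[ki i_lt].
have s_gt0 : (0 < size s)%N := leq_ltn_trans (leq0n i) i_lt.
by apply: sorted_ge_nth_le; rewrite // ltn_predL s_gt0 andbT -ltnS prednK.
Qed.

Lemma srankP (delta : R) (s : seq R) :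
  0 <= delta -> 0 < psum s (size s) ->
  (srank delta s <= size s)%N /\ 1 - delta <= psum s (srank delta s) / psum s (size s).
Proof.
move=> delta_ge0 tot_gt0.
set P := fun k => 1 - delta <= psum s k / psum s (size s).
have P_size : P (size s) by rewrite /P divff ?gt_eqF //; lra.
have has_P : has P (iota 0 (size s).+1).
  by apply/hasP; exists (size s); rewrite // mem_iota ltnS leqnn.
have k_lt : (srank delta s < (size s).+1)%N.
  by rewrite /srank -[X in (_ < X)%N](size_iota 0) -has_find.
split; first by rewrite -ltnS.
by have := nth_find 0 has_P; rewrite nth_iota // add0n.
Qed.

Lemma srank_ge (delta kappa : R) (s : seq R) :
  sorted (fun x y => y <= x) s -> all (fun x => 0 < x) s -> (0 < size s)%N ->
  0 <= delta <= 1 -> s`_0 <= kappa * s`_(size s).-1 ->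
  Num.ceil ((1 - delta) * (size s)%:R / (delta * kappa + (1 - delta)))
    <= (srank delta s)%:Z.
Proof.
move=> s_sorted s_pos s_gt0 /andP[delta_ge0 delta_le1] ratio.
have last_gt0 : 0 < s`_(size s).-1 by apply: (allP s_pos); rewrite mem_nth ?ltn_predL.
have kappa_ge1 : 1 <= kappa.
  have : s`_(size s).-1 <= s`_0 by rewrite sorted_ge_nth_le ?ltn_predL.
  by rewrite -(ler_pM2r last_gt0) mul1r => /le_trans/(_ ratio).
have tot_gt0 : 0 < psum s (size s).
  have [_] := psum_sorted_ge_bounds s_sorted (leq0n (size s)).
  rewrite subn0 /psum big_ord0 subr0; apply: lt_le_trans.
  by rewrite mulr_gt0 // ltr0n.
have [k_le frac] := srankP delta_ge0 tot_gt0.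
have [head tail] := psum_sorted_ge_bounds s_sorted k_le.
move: k_le frac head tail; set k := srank delta s; set A := psum s k.
set T := psum s (size s); rewrite ler_pdivlMr // => k_le frac head tail.
rewrite natrB // in tail.
have k_ge0 : 0 <= (k%:R : R) := ler0n _ k.
have compl_ge0 : 0 <= 1 - delta by rewrite subr_ge0.
have key : (1 - delta) * ((size s)%:R - k%:R) <= delta * k%:R * kappa.
  rewrite -(ler_pM2r last_gt0).
  have := ler_wpM2l compl_ge0 tail; have := ler_wpM2l delta_ge0 head.
  have := ler_wpM2l (mulr_ge0 delta_ge0 k_ge0) ratio.
  nra.
have den_gt0 : 0 < delta * kappa + (1 - delta) by nra.
rewrite ceil_le_int ler_pdivrMr // -[k%:~R]/(k%:R); nra.
Qed.

End Srank.

Section Eigenvalues.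
Variable F : fieldType.

Lemma eigenvalue_scalar1 m (e : F) : eigenvalue (1%:M : 'M[F]_m) e -> e = 1.
Proof.
case/eigenvalueP => v; rewrite mulmx1 => ve v_neq0; apply/eqP; rewrite eq_sym -subr_eq0.
apply: contraR v_neq0 => e1_neq0; apply/eqP.
have /eqP : (1 - e) *: v = 0 by rewrite scalerBl scale1r -{1}ve subrr.
by rewrite scaler_eq0 (negPf e1_neq0) => /eqP.
Qed.

Lemma eigenvalue_conj_diag m (P P' : 'M[F]_m) (D : 'rV[F]_m) j :
  P *m P' = 1%:M -> eigenvalue (P' *m diag_mx D *m P) (D 0 j).
Proof.
move=> PP'; apply/eigenvalueP; exists (delta_mx 0 j *m P).
  rewrite !mulmxA -(mulmxA _ P) PP' mulmx1 scalemxAl; congr (_ *m _).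
  apply/matrixP => a b; rewrite mul_mx_diag !mxE.
  case: (b =P j) => [->|/eqP b_neq_j]; first by rewrite ?eqxx /= mulrC.
  by rewrite andbF mul0r mulr0.
apply/eqP => /(congr1 (mulmx^~ P')); rewrite -mulmxA PP' mulmx1 mul0mx.
by move/matrixP/(_ 0 j); rewrite !mxE !eqxx /= => /eqP; rewrite oner_eq0.
Qed.

End Eigenvalues.

Section RealMatrices.
Variable R : realType.
Local Open Scope sesquilinear_scope.

Lemma pos_eigenvalues_eigenvalue m (M : 'M[R]_m) eta e :
  pos_eigenvalues M eta -> e \in eta -> eigenvalue M e.
Proof.
case=> _ [_ [_ charM]] e_eta.
by rewrite eigenvalue_root_char charM rootM root_prod_XsubC e_eta orbT.
Qed.

(* MathComp's spectral theorem lives over a numClosedFieldType, hence the detour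
   through R[i]. *)
Lemma sym_pos_eigenvalues_spectral m (M : 'M[R]_m) eta :
  M^T = M -> pos_eigenvalues M eta ->
  exists P : 'M[R[i]]_m, exists2 D : 'rV[R[i]]_m,
    P *m P^t* = 1%:M /\ map_mx (real_complex R) M = P^t* *m diag_mx D *m P
    & forall j, D 0 j = 0 \/ exists2 e, e \in eta & D 0 j = (e%:C)%C.
Proof.
move=> MT [_ [_ [_ charM]]]; set Mc := map_mx _ M.
have McT : Mc^t* = Mc.
  apply/matrixP => i j; rewrite !mxE.
  have -> : M j i = M i j by rewrite -[in RHS]MT mxE.
  by apply: conj_Creal; rewrite complex_real.
have /orthomx_spectralP McE : Mc \is normalmx by apply/normalmxP; rewrite McT.
set P := spectralmx Mc in McE; set D := spectral_diag Mc in McE.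
have PPt : P *m P^t* = 1%:M by apply/unitarymxP/spectral_unitarymx.
rewrite invmx_unitary ?spectral_unitarymx // in McE.
exists P, D => [|j]; first by split.
have := eigenvalue_conj_diag D j PPt; rewrite -McE.
rewrite eigenvalue_root_char -map_char_poly charM rmorphM /= map_polyXn map_prod_XsubC.
rewrite rootM /root hornerXn expf_eq0 => /orP[/andP[_ /eqP ->]|]; first by left.
rewrite -/(root _ _) -(big_map (real_complex R) xpredT (fun x => 'X - x%:P)).
by rewrite root_prod_XsubC => /mapP[e e_eta ->]; right; exists e.
Qed.

Lemma pos_eigenvalues_qform_bounds m (M : 'M[R]_m) eta x :
  M^T = M -> pos_eigenvalues M eta ->
  eta`_(size eta).-1 * qform M x <= qform (M *m M) x <= eta`_0 * qform M x.
Proof.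
move=> MT M_eta; have [eta_sorted [eta_pos _]] := M_eta.
have [P [D [PPt McE] D_eta]] := sym_pos_eigenvalues_spectral MT M_eta.
set xc := map_mx (real_complex R) x; set w := xc *m P^t*.
have Pxc : P *m xc^T = w^t*.
  apply/matrixP => i k; rewrite (ord1 k) !mxE rmorph_sum; apply: eq_bigr => j _.
  by rewrite !mxE rmorphM /= conjCK conj_Creal ?complex_real // mulrC.
have qformC (A : 'M[R]_m) :
    ((qform A x)%:C)%C = (xc *m map_mx (real_complex R) A *m xc^T) 0 0.
  by rewrite /qform /xc map_trmx -!map_mxM [RHS]mxE.
have diagE (d : 'rV[R[i]]_m) :
    (w *m diag_mx d *m w^t*) 0 0 = \sum_j d 0 j * (w 0 j * (w 0 j)^*).
  by rewrite mxE; apply: eq_bigr => j _; rewrite mul_mx_diag !mxE mulrAC mulrC.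
have qM : ((qform M x)%:C)%C = \sum_j D 0 j * (w 0 j * (w 0 j)^*).
  by rewrite qformC McE !mulmxA -/w -(mulmxA _ P) Pxc diagE.
have qMM : ((qform (M *m M) x)%:C)%C = \sum_j D 0 j ^+ 2 * (w 0 j * (w 0 j)^*).
  rewrite qformC map_mxM McE !mulmxA -/w -(mulmxA (w *m diag_mx D) P) PPt mulmx1.
  rewrite -(mulmxA _ P) Pxc -(mulmxA w) mulmx_diag diagE.
  by apply: eq_bigr => j _; rewrite !mxE expr2.
have termwise (z c : R[i]) :
    0 <= c -> z = 0 \/ (exists2 e, e \in eta & z = (e%:C)%C) ->
    (eta`_(size eta).-1)%:C%C * (z * c) <= z ^+ 2 * c
    /\ z ^+ 2 * c <= (eta`_0)%:C%C * (z * c).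
  move=> c_ge0 [->|[e e_eta ->]]; first by rewrite expr2 !mul0r !mulr0 lexx.
  have /andP[e_ge e_le] := sorted_ge_mem_bounds eta_sorted e_eta.
  have e_gt0 := allP eta_pos e e_eta.
  rewrite !mulrA -!rmorphM -rmorphXn; split; apply: ler_wpM2r => //; rewrite lecR; nra.
apply/andP; split; rewrite -lecR rmorphM /= qM qMM mulr_sumr; apply: ler_sum => j _.
  exact: (termwise _ _ (mul_conjC_ge0 _) (D_eta j)).1.
exact: (termwise _ _ (mul_conjC_ge0 _) (D_eta j)).2.
Qed.

Lemma DfI_ge0 a b (W : 'M[R]_(a, b)) : 0 <= DfI W.
Proof. by apply: sumr_ge0 => i _; apply: sumr_ge0 => j _; apply: sqr_ge0. Qed.

Lemma DfI_qform_bounds a b (W : 'M[R]_(a, b)) y :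
  (1 - Num.sqrt (DfI W)) * qform 1%:M y <= qform (W^T *m W) y
  <= (1 + Num.sqrt (DfI W)) * qform 1%:M y.
Proof.
have dev_le := qform_sqr_le (W^T *m W - 1%:M) y.
rewrite -/(DfI W) -(sqr_sqrtr (DfI_ge0 W)) -exprMn qformD qformN in dev_le.
have eps_ge0 := sqrtr_ge0 (DfI W).
have y_ge0 : 0 <= qform 1%:M y by rewrite qform1E sumr_ge0 // => i _; apply: sqr_ge0.
move: dev_le; rewrite -ler_sqrt ?sqr_ge0 // !sqrtr_sqr (ger0_norm (mulr_ge0 eps_ge0 y_ge0)).
by rewrite ler_norml => /andP[? ?]; apply/andP; split; lra.
Qed.

Lemma nz_singvals_sorted_pos m k (Phi : 'M[R]_(m, k)) sigma :
  nz_singvals Phi sigma ->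
  sorted (fun x y => y <= x) sigma /\ all (fun x => 0 < x) sigma.
Proof.
case=> lam [[lam_sorted [lam_pos _]] ->]; split.
  by rewrite sorted_map; apply: sub_sorted lam_sorted => x y; exact: ler_wsqrtr.
by apply/allP => _ /mapP[l l_lam ->]; rewrite sqrtr_gt0 (allP lam_pos).
Qed.

Lemma nz_singvals_ratio m k (Phi : 'M[R]_(m, k)) sigma lo hi :
  nz_singvals Phi sigma -> (0 < size sigma)%N -> 0 < lo ->
  (forall l, 0 < l -> eigenvalue (Phi^T *m Phi) l -> lo <= l <= hi) ->
  sigma`_0 <= Num.sqrt (hi / lo) * sigma`_(size sigma).-1.
Proof.
case=> lam [lam_eig ->]; rewrite size_map => lam_gt0 lo_gt0 lam_bounded.
have [_ [lam_pos _]] := lam_eig.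
have lam_bounds j : (j < size lam)%N -> lo <= lam`_j <= hi.
  move=> j_lt; have l_lam := mem_nth 0 j_lt.
  exact: lam_bounded (allP lam_pos _ l_lam) (pos_eigenvalues_eigenvalue lam_eig l_lam).
have /andP[_ first_le] := lam_bounds 0%N lam_gt0.
have /andP[last_ge _] : lo <= lam`_(size lam).-1 <= hi by rewrite lam_bounds ?ltn_predL.
have hi_ge0 : 0 <= hi by apply: le_trans _ first_le; rewrite ltW ?(allP lam_pos) ?mem_nth.
have ratio_ge0 : 0 <= hi / lo by rewrite divr_ge0 // ltW.
have last_ge0 : 0 <= lam`_(size lam).-1 := le_trans (ltW lo_gt0) last_ge.
rewrite !(nth_map 0) ?ltn_predL // -sqrtrM // ler_sqrt ?(mulr_ge0 ratio_ge0 last_ge0) //.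
rewrite mulrAC ler_pdivlMr //; nra.
Qed.

Lemma gram_eigenvalue_bounds n a b (Z : 'M[R]_(n, a)) (W Q : 'M[R]_(a, b)) (S : 'M[R]_b)
    eta l :
  (0 < n)%N -> is_psd_sqrt (W^T *m W) S -> W = Q *m S ->
  pos_eigenvalues (Q^T *m (n%:R^-1 *: (Z^T *m Z)) *m Q) eta ->
  Num.sqrt (DfI W) <= 1 -> 0 < l -> eigenvalue ((Z *m W)^T *m (Z *m W)) l ->
  (1 - Num.sqrt (DfI W)) * (n%:R * eta`_(size eta).-1) <= l
  <= (1 + Num.sqrt (DfI W)) * (n%:R * eta`_0).
Proof.
set M := Q^T *m _ *m Q => n_gt0 [[ST _] SS] WQS M_eta eps_le1 l_gt0.
have MT : M^T = M by rewrite /M !trmx_mul trmxK linearZ /= trmx_mul trmxK !mulmxA.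
have nM : n%:R *: M = Q^T *m (Z^T *m Z) *m Q.
  by rewrite /M -scalemxAr -scalemxAl scalerA mulfV ?scale1r // pnatr_eq0 -lt0n.
have n_ge0 : 0 <= (n%:R : R) := ler0n _ n.
have eta0_ge0 : 0 <= eta`_0.
  have [_ [eta_pos _]] := M_eta.
  by case: eta eta_pos {M_eta} => //= e ? /andP[/ltW].
have gramE : (Z *m W)^T *m (Z *m W) = S *m (n%:R *: M) *m S.
  by rewrite nM WQS !trmx_mul ST !mulmxA.
rewrite gramE; apply: eigenvalue_conj_qform_bounds;
  rewrite ?linearZ /= ?MT ?SS ?mulr_ge0 ?gt_eqF //.
- move=> x; rewrite -scalemxAl !qformZ.
  have /andP[? ?] := pos_eigenvalues_qform_bounds x MT M_eta; apply/andP; split; nra.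
- exact: DfI_qform_bounds.
- by rewrite sqrtr_ge0 eps_le1.
Qed.

Lemma mulmx_singvals_ratio n a b (Z : 'M[R]_(n, a)) (W Q : 'M[R]_(a, b)) (S : 'M[R]_b)
    eta sigma :
  let eps := Num.sqrt (DfI W) in
  (0 < n)%N -> is_psd_sqrt (W^T *m W) S -> W = Q *m S ->
  pos_eigenvalues (Q^T *m (n%:R^-1 *: (Z^T *m Z)) *m Q) eta -> (0 < size eta)%N ->
  nz_singvals (Z *m W) sigma -> (0 < size sigma)%N -> eps < 1 ->
  sigma`_0 <= Num.sqrt ((1 + eps) / (1 - eps)) * Num.sqrt (eta`_0 / eta`_(size eta).-1)
              * sigma`_(size sigma).-1.
Proof.
move=> eps n_gt0 S_sqrt WQS M_eta eta_gt0 sigma_Phi sigma_gt0 eps_lt1.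
have [_ [eta_pos _]] := M_eta.
have eta_last_gt0 : 0 < eta`_(size eta).-1 by rewrite (allP eta_pos) ?mem_nth ?ltn_predL.
have lo_gt0 : 0 < (1 - eps) * (n%:R * eta`_(size eta).-1).
  by rewrite !mulr_gt0 ?ltr0n ?subr_gt0.
have := nz_singvals_ratio sigma_Phi sigma_gt0 lo_gt0
  (fun l => gram_eigenvalue_bounds (l := l) n_gt0 S_sqrt WQS M_eta (ltW eps_lt1)).
have eps_ge0 : 0 <= eps := sqrtr_ge0 _.
rewrite -/eps -sqrtrM; last by apply: divr_ge0; lra.
suff -> : (1 + eps) / (1 - eps) * (eta`_0 / eta`_(size eta).-1)
        = (1 + eps) * (n%:R * eta`_0) / ((1 - eps) * (n%:R * eta`_(size eta).-1)) by [].
by field; rewrite !lt0r_neq0 ?subr_gt0 ?ltr0n.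
Qed.

End RealMatrices.

Theorem theorem3 (R : realType) (n a b : nat)
  (Z : 'M[R]_(n, a)) (W : 'M[R]_(a, b))
  (Q : 'M[R]_(a, b)) (S : 'M[R]_b)
  (d : nat) (eta sigma : seq R) (delta : R) :
  let Phi := Z *m W in
  let SigmaZ := n%:R^-1 *: (Z^T *m Z) in
  let eps := Num.sqrt (DfI W) in
  Q^T *m Q = 1%:M ->
  is_psd_sqrt (W^T *m W) S ->
  W = Q *m S ->
  d = \rank (Q^T *m SigmaZ *m Q) -> (1 <= d)%N ->
  pos_eigenvalues (Q^T *m SigmaZ *m Q) eta -> size eta = d ->
  nz_singvals Phi sigma -> size sigma = d ->
  0 <= delta <= 1 ->
  eps < 1 ->
  (Num.ceil (((1 - delta) * d%:R) /
      (delta * Num.sqrt ((1 + eps) / (1 - eps)) * Num.sqrt (eta`_0 / eta`_d.-1)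
       + (1 - delta))) <= (srank delta sigma)%:Z)
  /\
  (SigmaZ = 1%:M ->
   Num.ceil (((1 - delta) * d%:R) /
      (delta * Num.sqrt ((1 + eps) / (1 - eps)) + (1 - delta)))
   <= (srank delta sigma)%:Z).
Proof.
move=> Phi SigmaZ eps QtQ S_sqrt WQS d_rank d_gt0 M_eta eta_size sigma_Phi sigma_size
  delta01 eps_lt1.
set M := Q^T *m SigmaZ *m Q in d_rank M_eta.
have n_gt0 : (0 < n)%N.
  rewrite lt0n; apply: contraTneq d_gt0 => n0.
  have n_inv0 : (n%:R : R)^-1 = 0 by rewrite n0 invr0.
  by rewrite d_rank /M /SigmaZ n_inv0 scale0r mulmx0 mul0mx mxrank0.
have sigma_gt0 : (0 < size sigma)%N by rewrite sigma_size.
have := mulmx_singvals_ratio n_gt0 S_sqrt WQS M_eta _ sigma_Phi sigma_gt0 eps_lt1.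
rewrite eta_size => /(_ d_gt0) ratio.
have [sigma_sorted sigma_pos] := nz_singvals_sorted_pos sigma_Phi.
have := srank_ge sigma_sorted sigma_pos sigma_gt0 delta01 ratio.
rewrite sigma_size => main; split; first by move: main; rewrite mulrA.
move=> SigmaZ1.
have eta1 e : e \in eta -> e = 1.
  move/(pos_eigenvalues_eigenvalue M_eta); rewrite /M SigmaZ1 mulmx1 QtQ.
  exact: eigenvalue_scalar1.
have eta_first1 : eta`_0 = 1 by apply: eta1; rewrite mem_nth ?eta_size.
have eta_last1 : eta`_d.-1 = 1 by apply: eta1; rewrite mem_nth ?eta_size ?ltn_predL.
by move: main; rewrite eta_first1 eta_last1 divr1 sqrtr1 mulr1.
Qed.
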